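(* Let $|q|<1$ and let $(\alpha_n,\beta_n)$ be a Bailey pair with respect to $a$. Assume $|qa|<|z|$, no denominator vanishes, and all series converge absolutely. Then $$\sum_{n=1}^{\infty} (z;q)_{n}(q;q)_{n-1}\left( \frac{q a}{ z }\right )^{n} \beta_n - \sum_{n=1}^{\infty}\frac{(z;q)_{n}(q;q)_{n-1}}{(q a ,q a/z;q)_n}\left (\frac{q a}{z}\right)^{n}\alpha_n=f_1(a,z,q),$$ where $f_1(a,z,q)$ is given by each of the following (equal) expressions: $$f_1(a,z,q)=-\sum_{n=1}^{\infty} \frac{(q\sqrt{a},-q\sqrt{a},a,z;q)_{n}\,q^{n(n+1)/2}}{(\sqrt{a},-\sqrt{a},q a,qa/z;q)_{n}(1-q^n)}\left( \frac{- a}{ z }\right )^{n} =\sum_{n=1}^{\infty} \frac{(z;q)_{n}}{(q a;q)_{n}(1-q^n)}\left( \frac{q a}{ z }\right )^{n} =\sum_{n=1}^{\infty}\frac{a q^n/z}{1-a q^n/z}-\sum_{n=1}^{\infty}\frac{a q^n}{1-aq^n}.$$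
   Context: Notation: $(x;q)_n=(1-x)(1-xq)\cdots(1-xq^{n-1})$, $(x;q)_0=1$, $(x_1,\dots,x_m;q)_n=(x_1;q)_n\cdots(x_m;q)_n$. A Bailey pair with respect to $a$ (base $q$) is a pair of sequences $(\alpha_n,\beta_n)_{n\ge0}$ with $\alpha_0=\beta_0=1$ and, for $n>0$, $\beta_n=\sum_{j=0}^{n}\frac{\alpha_j}{(q;q)_{n-j}(aq;q)_{n+j}}$. *)

From Stdlib Require Import Reals.
Open Scope R_scope.

Record Cplx : Type := mkC { Re : R; Im : R }.

Definition RtoC (x : R) : Cplx := mkC x 0.
Definition Czero : Cplx := RtoC 0.
Definition Cone : Cplx := RtoC 1.
Definition Cadd (x y : Cplx) : Cplx := mkC (Re x + Re y) (Im x + Im y).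
Definition Copp (x : Cplx) : Cplx := mkC (- Re x) (- Im x).
Definition Csub (x y : Cplx) : Cplx := Cadd x (Copp y).
Definition Cmul (x y : Cplx) : Cplx :=
  mkC (Re x * Re y - Im x * Im y) (Re x * Im y + Im x * Re y).
Definition Cinv (x : Cplx) : Cplx :=
  let d := Re x * Re x + Im x * Im x in mkC (Re x / d) (- Im x / d).
Definition Cdiv (x y : Cplx) : Cplx := Cmul x (Cinv y).
Fixpoint Cpow (x : Cplx) (n : nat) : Cplx :=
  match n with O => Cone | S k => Cmul (Cpow x k) x end.
Definition Cmod (x : Cplx) : R := sqrt (Re x * Re x + Im x * Im x).

Declare Scope C_scope.
Delimit Scope C_scope with C.
Infix "+" := Cadd : C_scope.
Infix "-" := Csub : C_scope.
Infix "*" := Cmul : C_scope.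
Infix "/" := Cdiv : C_scope.
Notation "- x" := (Copp x) : C_scope.
Infix "^" := Cpow : C_scope.

Fixpoint qpoch (x q : Cplx) (n : nat) : Cplx :=
  match n with
  | O => Cone
  | S k => (qpoch x q k * (Cone - x * q ^ k))%C
  end.

Fixpoint Cpsum (f : nat -> Cplx) (N : nat) : Cplx :=
  match N with O => Czero | S k => (Cpsum f k + f k)%C end.

Definition Cseries_sum (f : nat -> Cplx) (s : Cplx) : Prop :=
  Un_cv (fun N => Re (Cpsum f N)) (Re s) /\ Un_cv (fun N => Im (Cpsum f N)) (Im s).

Definition Cabs_conv (f : nat -> Cplx) : Prop :=
  exists l : R, Un_cv (fun N => sum_f_R0 (fun n => Cmod (f n)) N) l.

Definition Csum_0_n (f : nat -> Cplx) (n : nat) : Cplx := Cpsum f (S n).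

Definition bailey_pair (a q : Cplx) (alpha beta : nat -> Cplx) : Prop :=
  alpha 0%nat = Cone /\ beta 0%nat = Cone /\
  forall n : nat, (0 < n)%nat ->
    beta n = Csum_0_n (fun j =>
       (alpha j / (qpoch q q (n - j) * qpoch (a * q) q (n + j)))%C) n.

(* Substituting the Bailey relation for [beta n] in the first series and exchanging the order of
   summation, the term [j = 0] gives [f_2], while for [j >= 1] the inner sum over [n] evaluates to
   the coefficient of [alpha j] in the second series: it telescopes for [j = 1], and a contiguous
   recurrence in [j] propagates the evaluation.  The exchange is justified by a geometric bound on
   the tails of the inner sums together with the absolute convergence of the second series.
   Applied to the unit Bailey pair ([beta n = 0] for [n > 0]) this turns the second series into
   [f_1], so [f_2 = - f_1].  Finally, replacing [a] by [a q^K] in [f_2] and telescoping in [K]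
   splits [f_2] into the two Lambert series. *)

From Stdlib Require Import Reals Lra Lia.
From Coquelicot Require Import Coquelicot.
Open Scope R_scope.

Definition Cn_cv (u : nat -> C) (l : C) : Prop :=
  forall eps, 0 < eps -> exists N, forall n, (N <= n)%nat -> Cmod (u n - l) < eps.

Lemma Cmod_sub_sym x y : Cmod (x - y) = Cmod (y - x).
Proof. replace (x - y)%C with (- (y - x))%C by ring. apply Cmod_opp. Qed.

Lemma Cmod_triangle_sub x y z : Cmod (x - z) <= Cmod (x - y) + Cmod (y - z).
Proof. replace (x - z)%C with ((x - y) + (y - z))%C by ring. apply Cmod_triangle. Qed.

Lemma Cmod_1_sub_ge y : 1 - Cmod y <= Cmod (1 - y).
Proof.
  pose proof (Cmod_triangle (1 - y) y) as H.
  replace (1 - y + y)%C with (RtoC 1) in H by ring. rewrite Cmod_1 in H. lra.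
Qed.

Lemma Cmod_1_sub_le y : Cmod (1 - y) <= 1 + Cmod y.
Proof. pose proof (Cmod_triangle 1 (- y)) as H. rewrite Cmod_1, Cmod_opp in H. exact H. Qed.

Lemma Cn_cv_unique u l1 l2 : Cn_cv u l1 -> Cn_cv u l2 -> l1 = l2.
Proof.
  intros H1 H2. destruct (Ceq_dec l1 l2) as [|Hne]; auto. exfalso.
  set (e := Cmod (l1 - l2)).
  assert (He : 0 < e).
  { apply Cmod_gt_0. intro H. apply Hne. replace l1 with ((l1 - l2) + l2)%C by ring.
    rewrite H. ring. }
  destruct (H1 (e / 2)) as [N1 HN1]; [lra|]. destruct (H2 (e / 2)) as [N2 HN2]; [lra|].
  specialize (HN1 (max N1 N2) (Nat.le_max_l _ _)).
  specialize (HN2 (max N1 N2) (Nat.le_max_r _ _)).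
  pose proof (Cmod_triangle_sub l1 (u (max N1 N2)) l2) as H.
  rewrite (Cmod_sub_sym l1 (u (max N1 N2))) in H. fold e in H. lra.
Qed.

Lemma Cn_cv_ext u v l : (forall n, u n = v n) -> Cn_cv u l -> Cn_cv v l.
Proof. intros E H eps He. destruct (H eps He) as [N HN]. exists N. intros. rewrite <- E. auto. Qed.

Lemma Cn_cv_const c : Cn_cv (fun _ => c) c.
Proof.
  intros eps He. exists O. intros. replace (c - c)%C with (RtoC 0) by ring.
  rewrite Cmod_0. auto.
Qed.

Lemma Cn_cv_shift u l : Cn_cv u l -> Cn_cv (fun n => u (S n)) l.
Proof. intros H eps He. destruct (H eps He) as [N HN]. exists N. intros. apply HN. lia. Qed.

Lemma Cn_cv_plus u v l m : Cn_cv u l -> Cn_cv v m -> Cn_cv (fun n => u n + v n)%C (l + m)%C.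
Proof.
  intros Hu Hv eps He.
  destruct (Hu (eps / 2)) as [N1 H1]; [lra|]. destruct (Hv (eps / 2)) as [N2 H2]; [lra|].
  exists (max N1 N2). intros n Hn.
  pose proof (Nat.le_max_l N1 N2). pose proof (Nat.le_max_r N1 N2).
  specialize (H1 n ltac:(lia)). specialize (H2 n ltac:(lia)).
  replace (u n + v n - (l + m))%C with ((u n - l) + (v n - m))%C by ring.
  pose proof (Cmod_triangle (u n - l) (v n - m)). lra.
Qed.

Lemma Cn_cv_scal c u l : Cn_cv u l -> Cn_cv (fun n => c * u n)%C (c * l)%C.
Proof.
  intros Hu eps He. set (k := Cmod c + 1).
  assert (Hk : 0 < k) by (pose proof (Cmod_ge_0 c); unfold k; lra).
  destruct (Hu (eps / k)) as [N H]; [apply Rdiv_lt_0_compat; auto|].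
  exists N. intros n Hn. specialize (H n Hn).
  replace (c * u n - c * l)%C with (c * (u n - l))%C by ring. rewrite Cmod_mult.
  apply Rle_lt_trans with (k * Cmod (u n - l)).
  - apply Rmult_le_compat_r; [apply Cmod_ge_0 | unfold k; lra].
  - replace eps with (k * (eps / k)) by (field; lra). apply Rmult_lt_compat_l; auto.
Qed.

Lemma Cn_cv_minus u v l m : Cn_cv u l -> Cn_cv v m -> Cn_cv (fun n => u n - v n)%C (l - m)%C.
Proof.
  intros Hu Hv. apply Cn_cv_plus; auto.
  apply (Cn_cv_ext (fun n => -1 * v n)%C); [intros; ring|].
  replace (- m)%C with (-1 * m)%C by ring. apply Cn_cv_scal; auto.
Qed.

Lemma pow_lt_eps r : 0 <= r < 1 ->
  forall eps, 0 < eps -> exists N, forall n, (N <= n)%nat -> r ^ n < eps.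
Proof.
  intros Hr eps He.
  destruct (pow_lt_1_zero r ltac:(rewrite Rabs_pos_eq; lra) eps He) as [N HN].
  exists N. intros n Hn. specialize (HN n ltac:(lia)).
  rewrite Rabs_pos_eq in HN; auto. apply pow_le; lra.
Qed.

Lemma Cn_cv_geom_bound u K r : 0 <= r < 1 ->
  (forall n, Cmod (u n) <= K * r ^ n) -> Cn_cv u (RtoC 0).
Proof.
  intros Hr Hb eps He. set (k := Rabs K + 1).
  assert (Hk : 0 < k) by (pose proof (Rabs_pos K); unfold k; lra).
  destruct (pow_lt_eps r Hr (eps / k)) as [N HN]; [apply Rdiv_lt_0_compat; auto|].
  exists N. intros n Hn. replace (u n - 0)%C with (u n) by ring.
  apply Rle_lt_trans with (k * r ^ n).
  - eapply Rle_trans; [apply Hb|]. apply Rmult_le_compat_r; [apply pow_le; lra|].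
    pose proof (Rle_abs K). unfold k; lra.
  - replace eps with (k * (eps / k)) by (field; lra). apply Rmult_lt_compat_l; auto.
Qed.

Lemma Cn_cv_dist_le_eventually u l v B N0 : Cn_cv u l ->
  (forall n, (N0 <= n)%nat -> Cmod (u n - v) <= B) -> Cmod (l - v) <= B.
Proof.
  intros H Hb. apply Rnot_lt_le. intro Hlt.
  destruct (H (Cmod (l - v) - B)) as [N HN]; [lra|].
  specialize (HN (max N N0) (Nat.le_max_l _ _)).
  specialize (Hb (max N N0) (Nat.le_max_r _ _)).
  pose proof (Cmod_triangle_sub l (u (max N N0)) v).
  rewrite (Cmod_sub_sym (u _)) in HN. lra.
Qed.

Fixpoint Csum (f : nat -> C) (N : nat) : C :=
  match N with O => RtoC 0 | S k => (Csum f k + f k)%C end.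

Fixpoint Rsum (f : nat -> R) (N : nat) : R :=
  match N with O => 0 | S k => Rsum f k + f k end.

Lemma Csum_ext f g N : (forall k, (k < N)%nat -> f k = g k) -> Csum f N = Csum g N.
Proof.
  induction N; simpl; intros H; auto.
  rewrite IHN by (intros; apply H; lia). rewrite H by lia. auto.
Qed.

Lemma Csum_plus f g N : Csum (fun k => f k + g k)%C N = (Csum f N + Csum g N)%C.
Proof. induction N; simpl; [ring|]. rewrite IHN. ring. Qed.

Lemma Csum_minus f g N : Csum (fun k => f k - g k)%C N = (Csum f N - Csum g N)%C.
Proof. induction N; simpl; [ring|]. rewrite IHN. ring. Qed.

Lemma Csum_scal c f N : Csum (fun k => c * f k)%C N = (c * Csum f N)%C.
Proof. induction N; simpl; [ring|]. rewrite IHN. ring. Qed.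

Lemma Csum_zero N : Csum (fun _ => RtoC 0) N = RtoC 0.
Proof. induction N; simpl; auto. rewrite IHN. ring. Qed.

Lemma Csum_S_l f N : Csum f (S N) = (f O + Csum (fun k => f (S k)) N)%C.
Proof.
  induction N; simpl; [ring|].
  simpl in IHN. rewrite IHN. ring.
Qed.

Lemma Csum_add f J L : Csum f (J + L) = (Csum f J + Csum (fun i => f (J + i)%nat) L)%C.
Proof.
  induction L; simpl; [rewrite Nat.add_0_r; ring|].
  rewrite Nat.add_succ_r. simpl. rewrite IHL. ring.
Qed.

Lemma Csum_telescope g N : Csum (fun k => g k - g (S k))%C N = (g O - g N)%C.
Proof. induction N; simpl; [ring|]. rewrite IHN. ring. Qed.

Lemma Cn_cv_Csum (h : nat -> nat -> C) (l : nat -> C) K :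
  (forall k, Cn_cv (h k) (l k)) -> Cn_cv (fun N => Csum (fun k => h k N) K) (Csum l K).
Proof. intros H. induction K; simpl; [apply Cn_cv_const|]. apply Cn_cv_plus; auto. Qed.

Lemma Rsum_le f g N : (forall k, (k < N)%nat -> f k <= g k) -> Rsum f N <= Rsum g N.
Proof.
  induction N; simpl; intros H; [lra|].
  pose proof (H N ltac:(lia)). pose proof (IHN ltac:(intros; apply H; lia)). lra.
Qed.

Lemma Rsum_nonneg f N : (forall k, 0 <= f k) -> 0 <= Rsum f N.
Proof. induction N; simpl; intros H; [lra|]. pose proof (H N). pose proof (IHN H). lra. Qed.

Lemma Rsum_scal c f N : Rsum (fun k => c * f k) N = c * Rsum f N.
Proof. induction N; simpl; [ring|]. rewrite IHN. ring. Qed.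

Lemma Rsum_add f J L : Rsum f (J + L) = Rsum f J + Rsum (fun i => f (J + i)%nat) L.
Proof.
  induction L; simpl; [rewrite Nat.add_0_r; ring|].
  rewrite Nat.add_succ_r. simpl. rewrite IHL. ring.
Qed.

Lemma sum_f_R0_Rsum f n : sum_f_R0 f n = Rsum f (S n).
Proof. induction n; simpl; [ring|]. rewrite IHn. simpl. ring. Qed.

Lemma Cmod_Csum_le f N : Cmod (Csum f N) <= Rsum (fun k => Cmod (f k)) N.
Proof.
  induction N; simpl; [rewrite Cmod_0; lra|].
  pose proof (Cmod_triangle (Csum f N) (f N)). lra.
Qed.

Lemma Rsum_geom_le r N : 0 <= r < 1 -> Rsum (fun k => r ^ k) N <= 1 / (1 - r).
Proof.
  intros Hr.
  assert (E : Rsum (fun k => r ^ k) N = (1 - r ^ N) / (1 - r)).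
  { induction N; simpl; [field; lra|]. rewrite IHN. field. lra. }
  rewrite E. apply Rmult_le_compat_r; [apply Rlt_le, Rinv_0_lt_compat; lra|].
  pose proof (pow_le r N). lra.
Qed.

Lemma pow_le_1 r n : 0 <= r <= 1 -> r ^ n <= 1.
Proof. intros H. induction n; simpl; [lra|]. pose proof (pow_le r n ltac:(lra)). nra. Qed.

Lemma pow_le_antimono r m n : 0 <= r <= 1 -> (m <= n)%nat -> r ^ n <= r ^ m.
Proof.
  intros Hr Hmn. replace n with (m + (n - m))%nat by lia. rewrite pow_add.
  pose proof (pow_le_1 r (n - m) Hr). pose proof (pow_le r m ltac:(lra)). nra.
Qed.

Lemma pow_mult_S_le r s i : 0 <= r <= 1 -> 0 <= s <= 1 -> (r * s) ^ S i <= s * r ^ i.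
Proof.
  intros Hr Hs. rewrite Rpow_mult_distr.
  replace ((r ^ S i) * (s ^ S i)) with (s * r ^ i * (r * s ^ i)) by (simpl; ring).
  pose proof (pow_le r i ltac:(lra)). pose proof (pow_le_1 s i Hs).
  pose proof (pow_le s i ltac:(lra)).
  assert (0 <= s * r ^ i) by nra. assert (r * s ^ i <= 1) by nra. nra.
Qed.

Lemma exp_le x y : x <= y -> exp x <= exp y.
Proof. intros [H|H]; [apply Rlt_le, exp_increasing; auto | subst; lra]. Qed.

Lemma finite_min_pos (f : nat -> R) N : (forall n, (n <= N)%nat -> 0 < f n) ->
  exists d, 0 < d /\ forall n, (n <= N)%nat -> d <= f n.
Proof.
  induction N; intros H.
  - exists (f O). split; [apply H; lia|]. intros n Hn. replace n with O by lia. lra.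
  - destruct IHN as [d [Hd Hd']]; [intros; apply H; lia|].
    exists (Rmin d (f (S N))). split; [apply Rmin_pos; [auto|apply H; lia]|].
    intros n Hn. destruct (Nat.eq_dec n (S N)); [subst; apply Rmin_r|].
    eapply Rle_trans; [apply Rmin_l | apply Hd'; lia].
Qed.

Lemma Rsum_geom_convolution_lim (x : nat -> R) l r :
  (forall i, 0 <= x i) -> Un_cv (sum_f_R0 x) l -> 0 <= r < 1 ->
  forall eps, 0 < eps ->
  exists N0, forall N, (N0 <= N)%nat -> Rsum (fun i => x i * r ^ (N - i)) N < eps.
Proof.
  intros Hx Hl Hr eps He.
  assert (Hle : forall n, sum_f_R0 x n <= l).
  { apply growing_ineq; auto. intro n. simpl. pose proof (Hx (S n)). lra. }
  destruct (Hl (eps / 2)) as [J HJ]; [lra|].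
  specialize (HJ J (le_n _)). unfold R_dist in HJ. rewrite sum_f_R0_Rsum in HJ.
  apply Rabs_def2 in HJ.
  set (SJ := Rsum x (S J)) in *.
  assert (HSJ : 0 <= SJ) by (apply Rsum_nonneg; auto).
  destruct (pow_lt_eps r Hr (eps / (2 * (SJ + 1)))) as [K HK]; [apply Rdiv_lt_0_compat; lra|].
  specialize (HK K (le_n _)).
  exists (S J + K)%nat. intros N HN.
  replace N with (S J + (N - S J))%nat at 1 by lia. rewrite Rsum_add.
  assert (Hhead : Rsum (fun i => x i * r ^ (N - i)) (S J) <= r ^ K * SJ).
  { unfold SJ. rewrite <- Rsum_scal. apply Rsum_le. intros k Hk.
    rewrite Rmult_comm. apply Rmult_le_compat_r; auto. apply pow_le_antimono; [lra|lia]. }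
  assert (Htail : Rsum (fun i => x (S J + i)%nat * r ^ (N - (S J + i))) (N - S J)
                  <= Rsum (fun i => x (S J + i)%nat) (N - S J)).
  { apply Rsum_le. intros k Hk. pose proof (Hx (S J + k)%nat).
    pose proof (pow_le_1 r (N - (S J + k)) ltac:(lra)). nra. }
  assert (Hsum : Rsum x N <= l).
  { destruct N; [lia|]. rewrite <- sum_f_R0_Rsum. apply Hle. }
  replace N with (S J + (N - S J))%nat in Hsum at 1 by lia. rewrite Rsum_add in Hsum.
  fold SJ in Hsum.
  assert (Hsmall : r ^ K * SJ <= eps / 2).
  { assert (r ^ K * (2 * (SJ + 1)) < eps).
    { apply (Rmult_lt_compat_r (2 * (SJ + 1))) in HK; [|lra].
      replace (eps / (2 * (SJ + 1)) * (2 * (SJ + 1))) with eps in HK by (field; lra). exact HK. }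
    pose proof (pow_le r K ltac:(lra)). nra. }
  lra.
Qed.

(** * q-Pochhammer symbols *)

Fixpoint Cqpoch (x q : C) (n : nat) : C :=
  match n with O => RtoC 1 | S k => (Cqpoch x q k * (1 - x * q ^ k))%C end.

Lemma Cqpoch_S x q n : Cqpoch x q (S n) = (Cqpoch x q n * (1 - x * q ^ n))%C.
Proof. reflexivity. Qed.

Lemma Cqpoch_add x q k n : Cqpoch x q (k + n) = (Cqpoch x q k * Cqpoch (x * q ^ k) q n)%C.
Proof.
  induction n; simpl; [rewrite Nat.add_0_r; ring|].
  rewrite Nat.add_succ_r. simpl. rewrite IHn, Cpow_add_r. ring.
Qed.

Lemma Cqpoch_S_l x q n : Cqpoch x q (S n) = ((1 - x) * Cqpoch (x * q) q n)%C.
Proof.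
  replace (S n) with (1 + n)%nat by lia. rewrite Cqpoch_add, Cpow_1_r.
  change (Cqpoch x q 1) with (1 * (1 - x * q ^ 0))%C. ring.
Qed.

Lemma Csub_mult_neq_0 z b p :
  z <> RtoC 0 -> (1 - b / z * p)%C <> RtoC 0 -> (z - b * p)%C <> RtoC 0.
Proof.
  intros Hz H E. apply H. replace (1 - b / z * p)%C with ((z - b * p) / z)%C by (field; auto).
  rewrite E. unfold Cdiv. ring.
Qed.

Section Nonvanishing.
Variables x q : C.
Hypothesis Hx : forall n, Cqpoch x q n <> RtoC 0.

Lemma Cqpoch_shift_neq_0 K n : Cqpoch (x * q ^ K) q n <> RtoC 0.
Proof. intros E. apply (Hx (K + n)%nat). rewrite Cqpoch_add, E. ring. Qed.

Lemma Cqpoch_factor_neq_0 k : (1 - x * q ^ k)%C <> RtoC 0.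
Proof. intros E. apply (Hx (S k)). simpl. rewrite E. ring. Qed.

End Nonvanishing.

Section UnitDisk.
Variable q : C.
Hypothesis Hq : Cmod q < 1.

Lemma Cmod_q_range : 0 <= Cmod q < 1.
Proof. split; [apply Cmod_ge_0 | exact Hq]. Qed.

Lemma Cmod_1_sub_pow_ge n : (0 < n)%nat -> 1 - Cmod q <= Cmod (1 - q ^ n).
Proof.
  intros Hn. eapply Rle_trans; [|apply Cmod_1_sub_ge]. rewrite Cmod_pow.
  destruct n as [|n]; [lia|]. simpl.
  pose proof Cmod_q_range. pose proof (pow_le_1 (Cmod q) n ltac:(lra)). nra.
Qed.

Lemma one_sub_pow_neq_0 n : (0 < n)%nat -> (1 - q ^ n)%C <> RtoC 0.
Proof.
  intros Hn E. pose proof (Cmod_1_sub_pow_ge n Hn) as H.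
  rewrite E, Cmod_0 in H. lra.
Qed.

Lemma Cqpoch_q_neq_0 n : Cqpoch q q n <> RtoC 0.
Proof.
  induction n; simpl; [intro E; injection E; lra|].
  apply Cmult_neq_0; auto.
  replace (q * q ^ n)%C with (q ^ S n)%C by (rewrite Cpow_S; ring).
  apply one_sub_pow_neq_0. lia.
Qed.

Lemma Cmod_mult_pow_le x K : Cmod (x * q ^ K) <= Cmod x.
Proof.
  rewrite Cmod_mult, Cmod_pow. pose proof Cmod_q_range. pose proof (Cmod_ge_0 x).
  pose proof (pow_le_1 (Cmod q) K ltac:(lra)). nra.
Qed.

Lemma Cmod_Cqpoch_le_exp x c n : Cmod x <= c -> Cmod (Cqpoch x q n) <= exp (c / (1 - Cmod q)).
Proof.
  intros Hc. pose proof Cmod_q_range.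
  assert (Hexp : Cmod (Cqpoch x q n) <= exp (Cmod x * Rsum (fun k => Cmod q ^ k) n)).
  { induction n; simpl; [rewrite Cmod_1, Rmult_0_r, exp_0; lra|].
    rewrite Cmod_mult, Rmult_plus_distr_l, exp_plus.
    pose proof (Cmod_1_sub_le (x * q ^ n)) as H1. rewrite Cmod_mult, Cmod_pow in H1.
    pose proof (exp_ineq1_le (Cmod x * Cmod q ^ n)).
    apply Rmult_le_compat; [apply Cmod_ge_0 | apply Cmod_ge_0 | exact IHn | lra]. }
  eapply Rle_trans; [apply Hexp|]. apply exp_le. unfold Rdiv.
  pose proof (Rsum_geom_le (Cmod q) n Cmod_q_range).
  pose proof (Rsum_nonneg (fun k => Cmod q ^ k) n (fun k => pow_le _ k (Cmod_ge_0 q))).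
  pose proof (Cmod_ge_0 x). apply Rmult_le_compat; lra.
Qed.

(* Weierstrass product inequality. *)
Lemma Cmod_Cqpoch_ge x n : 1 - Cmod x * Rsum (fun k => Cmod q ^ k) n <= Cmod (Cqpoch x q n).
Proof.
  induction n; simpl; [rewrite Cmod_1; lra|].
  rewrite Cmod_mult, Rmult_plus_distr_l.
  set (t := Cmod x * Cmod q ^ n). set (s := Cmod x * Rsum (fun k => Cmod q ^ k) n) in *.
  assert (Ht : 0 <= t) by (apply Rmult_le_pos; [apply Cmod_ge_0 | apply pow_le, Cmod_ge_0]).
  assert (Hs : 0 <= s).
  { apply Rmult_le_pos; [apply Cmod_ge_0|]. apply Rsum_nonneg. intros; apply pow_le, Cmod_ge_0. }
  assert (Hfac : 1 - t <= Cmod (1 - x * q ^ n)).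
  { unfold t. rewrite <- Cmod_pow, <- Cmod_mult. apply Cmod_1_sub_ge. }
  pose proof (Cmod_ge_0 (Cqpoch x q n)). pose proof (Cmod_ge_0 (1 - x * q ^ n)).
  destruct (Rle_lt_dec 1 t); [nra|].
  apply Rle_trans with (Cmod (Cqpoch x q n) * (1 - t)); [nra|].
  apply Rmult_le_compat_l; lra.
Qed.

Lemma Cqpoch_bounded_below x : (forall n, Cqpoch x q n <> RtoC 0) ->
  exists d, 0 < d /\ forall n, d <= Cmod (Cqpoch x q n).
Proof.
  intros Hnz. pose proof Cmod_q_range as Hr.
  set (r := Cmod q) in *. set (c := Cmod x).
  assert (Hc : 0 <= c) by apply Cmod_ge_0.
  destruct (pow_lt_eps r Hr ((1 - r) / (2 * (c + 1)))) as [N HN]; [apply Rdiv_lt_0_compat; lra|].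
  specialize (HN N (le_n _)).
  assert (Htail : forall m, 1 / 2 <= Cmod (Cqpoch (x * q ^ N) q m)).
  { intros m. eapply Rle_trans; [|apply Cmod_Cqpoch_ge].
    rewrite Cmod_mult, Cmod_pow. fold r c.
    pose proof (Rsum_geom_le r m Hr). pose proof (pow_le r N ltac:(lra)).
    assert (c * r ^ N * (1 / (1 - r)) <= 1 / 2).
    { replace (1 / 2) with ((c + 1) * ((1 - r) / (2 * (c + 1))) * (1 / (1 - r))) by (field; lra).
      apply Rmult_le_compat_r; [apply Rlt_le, Rdiv_lt_0_compat; lra|]. nra. }
    assert (0 <= c * r ^ N) by nra. nra. }
  destruct (finite_min_pos (fun n => Cmod (Cqpoch x q n)) N) as [d [Hd Hd']].
  { intros. apply Cmod_gt_0; auto. }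
  assert (HN0 : 0 < Cmod (Cqpoch x q N)) by (apply Cmod_gt_0; auto).
  exists (Rmin d (Cmod (Cqpoch x q N) / 2)). split; [apply Rmin_pos; lra|].
  intros n. destruct (Compare_dec.le_lt_dec n N).
  - eapply Rle_trans; [apply Rmin_l | apply Hd'; auto].
  - eapply Rle_trans; [apply Rmin_r|].
    replace n with (N + (n - N))%nat by lia. rewrite Cqpoch_add, Cmod_mult.
    pose proof (Htail (n - N)%nat). nra.
Qed.

Lemma Cqpoch_shift_bounded_below x : (forall n, Cqpoch x q n <> RtoC 0) ->
  exists d, 0 < d /\ forall K n, d <= Cmod (Cqpoch (x * q ^ K) q n).
Proof.
  intros Hx.
  destruct (Cqpoch_bounded_below x Hx) as [d [Hd Hd']].
  set (K0 := exp (Cmod x / (1 - Cmod q))).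
  assert (HK : 0 < K0) by apply exp_pos.
  exists (d / K0). split; [apply Rdiv_lt_0_compat; auto|]. intros K n.
  specialize (Hd' (K + n)%nat). rewrite Cqpoch_add, Cmod_mult in Hd'.
  pose proof (Cmod_Cqpoch_le_exp x (Cmod x) K (Rle_refl _)).
  pose proof (Cmod_ge_0 (Cqpoch (x * q ^ K) q n)).
  apply (Rmult_le_reg_l K0); auto. replace (K0 * (d / K0)) with d by (field; lra).
  eapply Rle_trans; [apply Hd'|]. apply Rmult_le_compat_r; auto.
Qed.

End UnitDisk.

(** * The series [f_2] as a difference of two Lambert series *)

Section Lambert.
Variables q a z : C.
Hypothesis Hq : Cmod q < 1.
Hypothesis Hz : z <> RtoC 0.
Hypothesis Hw : Cmod (q * a / z) < 1.
Hypothesis HA : forall n, Cqpoch (q * a) q n <> RtoC 0.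
Hypothesis HW : forall n, Cqpoch (q * a / z) q n <> RtoC 0.

Local Notation A := (q * a)%C.
Local Notation w := (q * a / z)%C.

(* The summand of [f_2] with [a] replaced by [a q^K]. *)
Definition F2_shift K n :=
  (Cqpoch z q n * (w * q ^ K) ^ n / (Cqpoch (A * q ^ K) q n * (1 - q ^ n)))%C.
Definition F2_tel K n := (Cqpoch z q n * (w * q ^ K) ^ n / Cqpoch (A * q ^ K) q n)%C.
Definition F2_shift_sum K N := Csum (fun i => F2_shift K (S i)) N.

Lemma Cmod_w_range : 0 <= Cmod w < 1.
Proof. split; [apply Cmod_ge_0 | exact Hw]. Qed.

Lemma F2_shift_telescope K n : (0 < n)%nat ->
  (F2_shift K n - F2_shift (S K) n = (F2_tel K n - F2_tel K (S n)) / (1 - w * q ^ K))%C.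
Proof.
  intros Hn. unfold F2_shift, F2_tel.
  pose proof (Cqpoch_S_l (A * q ^ K) q n) as Hs. simpl Cqpoch in Hs |- *.
  rewrite !Cpow_S in *.
  replace (A * (q * q ^ K))%C with (A * q ^ K * q)%C by ring.
  set (X := (A * q ^ K)%C) in *. set (Y := Cqpoch X q n) in *. set (Y' := Cqpoch (X * q) q n) in *.
  set (p := (q ^ n)%C) in *. set (v := (w * q ^ K)%C) in *.
  replace ((v * q) ^ n)%C with (v ^ n * p)%C by (unfold p; rewrite Cpow_mult_l; ring).
  replace ((w * (q * q ^ K)) ^ n)%C with (v ^ n * p)%C
    by (unfold v, p; rewrite <- Cpow_mult_l; f_equal; ring).
  assert (HX : X = (z * v)%C) by (unfold X, v; field; auto).
  assert (HY : Y <> RtoC 0) by (apply Cqpoch_shift_neq_0; auto).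
  assert (HX1 : (1 - X)%C <> RtoC 0) by (apply Cqpoch_factor_neq_0; auto).
  assert (HXp : (1 - X * p)%C <> RtoC 0).
  { unfold X, p. rewrite <- Cmult_assoc, <- Cpow_add_r. apply Cqpoch_factor_neq_0; auto. }
  assert (Hp : (1 - p)%C <> RtoC 0) by (apply one_sub_pow_neq_0; auto).
  assert (Hv : (1 - v)%C <> RtoC 0) by (apply Cqpoch_factor_neq_0; auto).
  assert (HY' : Y' = (Y * (1 - X * p) / (1 - X))%C) by (rewrite Hs; field; auto).
  rewrite HY', HX in *. field. repeat split; auto.
Qed.

Definition lambert_diff k := (F2_tel k 1 / (1 - w * q ^ k))%C.
Definition lambert_rem k N := (F2_tel k (S N) / (1 - w * q ^ k))%C.

Lemma F2_shift_sum_decomp K N :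
  F2_shift_sum O N = (Csum (fun k => lambert_diff k - lambert_rem k N) K + F2_shift_sum K N)%C.
Proof.
  induction K; simpl; [ring|]. rewrite IHK.
  assert (Hstep : (F2_shift_sum K N - F2_shift_sum (S K) N
                   = (F2_tel K 1 - F2_tel K (S N)) / (1 - w * q ^ K))%C).
  { unfold F2_shift_sum. rewrite <- Csum_minus.
    rewrite (Csum_ext _ (fun i => / (1 - w * q ^ K) * (F2_tel K (S i) - F2_tel K (S (S i))))%C).
    - rewrite Csum_scal, (Csum_telescope (fun i => F2_tel K (S i))). unfold Cdiv. ring.
    - intros i _. rewrite F2_shift_telescope by lia. unfold Cdiv. ring. }
  replace (F2_shift_sum K N)
    with (F2_shift_sum (S K) N + (F2_tel K 1 - F2_tel K (S N)) / (1 - w * q ^ K))%C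
    by (rewrite <- Hstep; ring).
  unfold lambert_diff, lambert_rem, Cdiv. ring.
Qed.

Lemma Cmod_F2_shift_le :
  exists B, forall K i, Cmod (F2_shift K (S i)) <= B * Cmod q ^ K * Cmod w ^ i.
Proof.
  pose proof (fun n => Cmod_Cqpoch_le_exp q Hq z (Cmod z) n (Rle_refl _)) as HKz.
  set (Kz := exp (Cmod z / (1 - Cmod q))) in HKz.
  destruct (Cqpoch_shift_bounded_below q Hq A HA) as [d [Hd Hd']].
  pose proof (Cmod_q_range q Hq) as Hq'. pose proof Cmod_w_range as Hw'.
  exists (Kz / (d * (1 - Cmod q))). intros K i.
  unfold F2_shift. rewrite Cmod_div.
  2:{ apply Cmult_neq_0; [apply Cqpoch_shift_neq_0; auto | apply one_sub_pow_neq_0; auto; lia]. }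
  rewrite !Cmod_mult, !Cmod_pow, Cmod_mult, Cmod_pow. unfold Rdiv.
  assert (Hqk : 0 <= Cmod q ^ K <= 1) by (split; [apply pow_le | apply pow_le_1]; lra).
  pose proof (pow_mult_S_le (Cmod w) (Cmod q ^ K) i ltac:(lra) Hqk) as Hpow.
  pose proof (Cmod_1_sub_pow_ge q Hq (S i) ltac:(lia)) as H1.
  assert (HD : d * (1 - Cmod q) <= Cmod (Cqpoch (A * q ^ K) q (S i)) * Cmod (1 - q ^ S i))
    by (apply Rmult_le_compat; auto; lra).
  assert (HD0 : 0 < d * (1 - Cmod q)) by (apply Rmult_lt_0_compat; lra).
  pose proof (Rinv_le_contravar _ _ HD0 HD) as HI.
  replace (Kz * / (d * (1 - Cmod q)) * Cmod q ^ K * Cmod w ^ i)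
    with (Kz * (Cmod q ^ K * Cmod w ^ i) * / (d * (1 - Cmod q))) by ring.
  assert (0 <= (Cmod w * Cmod q ^ K) ^ S i) by (apply pow_le; nra).
  apply Rmult_le_compat; auto.
  - apply Rmult_le_pos; [apply Cmod_ge_0 | auto].
  - apply Rlt_le, Rinv_0_lt_compat. lra.
  - apply Rmult_le_compat; auto. apply Cmod_ge_0.
Qed.

Lemma F2_shift_sum_bound : exists B, forall K N, Cmod (F2_shift_sum K N) <= B * Cmod q ^ K.
Proof.
  destruct Cmod_F2_shift_le as [B HB]. pose proof Cmod_w_range as Hw'.
  exists (Rabs B / (1 - Cmod w)). intros K N. unfold F2_shift_sum.
  eapply Rle_trans; [apply Cmod_Csum_le|].
  eapply Rle_trans; [apply (Rsum_le _ (fun i => Rabs B * Cmod q ^ K * Cmod w ^ i))|].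
  { intros i _. eapply Rle_trans; [apply HB|].
    pose proof (pow_le (Cmod q) K (Cmod_ge_0 q)). pose proof (pow_le (Cmod w) i ltac:(lra)).
    pose proof (Rle_abs B). apply Rmult_le_compat_r; [lra|]. apply Rmult_le_compat_r; lra. }
  rewrite Rsum_scal. pose proof (Rsum_geom_le (Cmod w) N Hw').
  replace (Rabs B / (1 - Cmod w) * Cmod q ^ K) with (Rabs B * Cmod q ^ K * (1 / (1 - Cmod w)))
    by (field; lra).
  apply Rmult_le_compat_l; auto. apply Rmult_le_pos; [apply Rabs_pos | apply pow_le, Cmod_ge_0].
Qed.

Lemma lambert_rem_lim k : Cn_cv (lambert_rem k) (RtoC 0).
Proof.
  pose proof (fun n => Cmod_Cqpoch_le_exp q Hq z (Cmod z) n (Rle_refl _)) as HKz.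
  set (Kz := exp (Cmod z / (1 - Cmod q))) in HKz.
  destruct (Cqpoch_shift_bounded_below q Hq A HA) as [d [Hd Hd']].
  pose proof (Cmod_q_range q Hq) as Hq'. pose proof Cmod_w_range as Hw'.
  assert (Hv : 0 < Cmod (1 - w * q ^ k)) by (apply Cmod_gt_0, Cqpoch_factor_neq_0; auto).
  apply (Cn_cv_geom_bound _ (Kz / d * / Cmod (1 - w * q ^ k)) (Cmod w)); auto.
  intros N. unfold lambert_rem, F2_tel.
  rewrite !Cmod_div by first [apply Cqpoch_shift_neq_0; exact HA | apply Cmod_gt_0; lra].
  rewrite !Cmod_mult, !Cmod_pow, Cmod_mult, Cmod_pow. unfold Rdiv.
  assert (Hqk : 0 <= Cmod q ^ k <= 1) by (split; [apply pow_le | apply pow_le_1]; lra).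
  pose proof (pow_mult_S_le (Cmod w) (Cmod q ^ k) N ltac:(lra) Hqk) as Hpow.
  assert (Hpow' : (Cmod w * Cmod q ^ k) ^ S N <= Cmod w ^ N).
  { pose proof (pow_le (Cmod w) N ltac:(lra)). nra. }
  pose proof (Rinv_le_contravar _ _ Hd (Hd' k (S N))).
  replace (Kz * / d * / Cmod (1 - w * q ^ k) * Cmod w ^ N)
    with (Kz * Cmod w ^ N * / d * / Cmod (1 - w * q ^ k)) by ring.
  apply Rmult_le_compat_r; [apply Rlt_le, Rinv_0_lt_compat; auto|].
  assert (0 <= (Cmod w * Cmod q ^ k) ^ S N) by (apply pow_le; nra).
  apply Rmult_le_compat; auto.
  - apply Rmult_le_pos; [apply Cmod_ge_0 | auto].
  - apply Rlt_le, Rinv_0_lt_compat. apply Rlt_le_trans with d; auto.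
  - apply Rmult_le_compat; auto. apply Cmod_ge_0.
Qed.

Lemma lambert_diff_eq k : lambert_diff k =
  (a * q ^ (S k) / z / (1 - a * q ^ (S k) / z) - a * q ^ (S k) / (1 - a * q ^ (S k)))%C.
Proof.
  assert (Hv : (1 - w * q ^ k)%C <> RtoC 0) by (apply Cqpoch_factor_neq_0; auto).
  assert (HX : (1 - A * q ^ k)%C <> RtoC 0) by (apply Cqpoch_factor_neq_0; auto).
  pose proof (Csub_mult_neq_0 z A (q ^ k) Hz Hv).
  unfold lambert_diff, F2_tel. simpl Cqpoch. rewrite Cpow_S. simpl Cpow.
  replace (a * (q * q ^ k) / z)%C with (w * q ^ k)%C by (field; auto).
  replace (a * (q * q ^ k))%C with (A * q ^ k)%C by ring.
  field. repeat split; auto.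
Qed.

Theorem F2_lambert f2 f3 f4 :
  Cn_cv (Csum (fun k => Cqpoch z q (S k) / (Cqpoch A q (S k) * (1 - q ^ (S k))) * w ^ (S k)))%C
    f2 ->
  Cn_cv (Csum (fun k => a * q ^ (S k) / z / (1 - a * q ^ (S k) / z)))%C f3 ->
  Cn_cv (Csum (fun k => a * q ^ (S k) / (1 - a * q ^ (S k))))%C f4 ->
  f2 = (f3 - f4)%C.
Proof.
  intros H2 H3 H4.
  assert (Hg : Cn_cv (Csum lambert_diff) (f3 - f4)%C).
  { eapply Cn_cv_ext; [|apply (Cn_cv_minus _ _ _ _ H3 H4)]. intros n. simpl.
    rewrite <- Csum_minus. apply Csum_ext. intros. rewrite lambert_diff_eq. auto. }
  assert (HP : Cn_cv (F2_shift_sum O) f2).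
  { eapply Cn_cv_ext; [|apply H2]. intros N. apply Csum_ext. intros k _.
    unfold F2_shift. rewrite !Cmult_1_r. unfold Cdiv. ring. }
  destruct F2_shift_sum_bound as [B HB].
  (* [f2 - sum_{k<K} lambert_diff k] is the limit in [N] of [F2_shift_sum K N]. *)
  assert (Hd : Cn_cv (fun K => f2 - Csum lambert_diff K)%C (RtoC 0)).
  { apply (Cn_cv_geom_bound _ (Rabs B) (Cmod q)); [apply Cmod_q_range; auto|]. intros K.
    apply (Cn_cv_dist_le_eventually
      (fun N => F2_shift_sum O N + Csum (fun k => lambert_rem k N) K)%C f2 _ _ O).
    - rewrite <- (Cplus_0_r f2), <- (Csum_zero K). apply Cn_cv_plus; auto.
      apply Cn_cv_Csum. apply lambert_rem_lim.
    - intros N _. rewrite (F2_shift_sum_decomp K N), Csum_minus.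
      replace (Csum lambert_diff K - Csum (fun k => lambert_rem k N) K + F2_shift_sum K N
               + Csum (fun k => lambert_rem k N) K - Csum lambert_diff K)%C
        with (F2_shift_sum K N) by ring.
      eapply Rle_trans; [apply HB|].
      apply Rmult_le_compat_r; [apply pow_le, Cmod_ge_0 | apply Rle_abs]. }
  pose proof (Cn_cv_minus _ _ _ _ (Cn_cv_const f2) Hd) as Hf2.
  replace (f2 - 0)%C with f2 in Hf2 by ring.
  apply (Cn_cv_unique (Csum lambert_diff)); auto.
  eapply Cn_cv_ext; [|exact Hf2]. intros; simpl; ring.
Qed.

End Lambert.

(** * Summing the Bailey relation against the coefficients of [T_1] *)

Section Bailey.
Variables q a z : C.
Variables alpha beta : nat -> C.
Hypothesis Hq : Cmod q < 1.
Hypothesis Hz : z <> RtoC 0.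
Hypothesis Hw : Cmod (q * a / z) < 1.
Hypothesis HA : forall n, Cqpoch (q * a) q n <> RtoC 0.
Hypothesis HW : forall n, Cqpoch (q * a / z) q n <> RtoC 0.
Hypothesis Halpha0 : alpha O = RtoC 1.
Hypothesis Hbeta : forall n, (0 < n)%nat ->
  beta n = Csum (fun j => alpha j / (Cqpoch q q (n - j) * Cqpoch (q * a) q (n + j)))%C (S n).

Local Notation A := (q * a)%C.
Local Notation w := (q * a / z)%C.

Definition T1_term k := (Cqpoch z q (S k) * Cqpoch q q k * w ^ (S k) * beta (S k))%C.
Definition T2_term k :=
  (Cqpoch z q (S k) * Cqpoch q q k / (Cqpoch A q (S k) * Cqpoch w q (S k)) * w ^ (S k)
   * alpha (S k))%C.
Definition F2_term k := (Cqpoch z q (S k) / (Cqpoch A q (S k) * (1 - q ^ (S k))) * w ^ (S k))%C.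

Definition beta_coef n := (Cqpoch z q n * Cqpoch q q (pred n) * w ^ n)%C.
Definition alpha_coef n :=
  (Cqpoch z q n * Cqpoch q q (pred n) / (Cqpoch A q n * Cqpoch w q n) * w ^ n)%C.
(* Substituting the Bailey relation, [alpha j] is multiplied by the series over [m] of these. *)
Definition alpha_coef_term j m := (beta_coef (j + m) / (Cqpoch q q m * Cqpoch A q (j + j + m)))%C.

Lemma w_neq_1 : (w - 1)%C <> RtoC 0.
Proof.
  intro E. assert (Ew : w = RtoC 1) by (replace w with ((w - 1) + 1)%C by ring; rewrite E; ring).
  pose proof Hw as H. rewrite Ew, Cmod_1 in H. lra.
Qed.

Lemma A_factor_neq_0 m : (1 - A * q ^ m)%C <> RtoC 0.
Proof. apply Cqpoch_factor_neq_0; auto. Qed.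

Lemma w_factor_neq_0 m : (1 - w * q ^ m)%C <> RtoC 0.
Proof. apply Cqpoch_factor_neq_0; auto. Qed.

Lemma q_factor_neq_0 m : (1 - q * q ^ m)%C <> RtoC 0.
Proof. apply Cqpoch_factor_neq_0, Cqpoch_q_neq_0; auto. Qed.

Lemma alpha_coef_term_factor j m : (0 < j)%nat ->
  alpha_coef_term j m = (alpha_coef j * (Cqpoch w q j * Cqpoch (z * q ^ j) q m * Cqpoch (q ^ j) q m
    * w ^ m / (Cqpoch q q m * Cqpoch (A * q ^ j) q (j + m))))%C.
Proof.
  intros Hj. destruct j as [|j]; [lia|].
  unfold alpha_coef_term, alpha_coef, beta_coef.
  replace (pred (S j + m)) with (j + m)%nat by lia. simpl pred.
  replace (S j + S j + m)%nat with (S j + (S j + m))%nat by lia.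
  rewrite (Cqpoch_add z q (S j) m), (Cqpoch_add q q j m), (Cqpoch_add A q (S j) (S j + m)),
    Cpow_add_r.
  replace (q * q ^ j)%C with (q ^ S j)%C by (rewrite Cpow_S; reflexivity).
  pose proof (Cqpoch_q_neq_0 q Hq m). pose proof (HA (S j)). pose proof (HW (S j)).
  pose proof (Cqpoch_shift_neq_0 A q HA (S j) (S j + m)).
  field. repeat split; auto.
Qed.

(* Uniform in [j] relative to [alpha_coef j]: hence the tails of the inner series are dominated
   by the terms of the (absolutely convergent) second series. *)
Lemma Cmod_alpha_coef_term_le : exists K, 0 <= K /\ forall j m, (0 < j)%nat ->
  Cmod (alpha_coef_term j m) <= K * Cmod (alpha_coef j) * Cmod w ^ m.
Proof.
  pose proof (Cmod_q_range q Hq) as Hq'.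
  destruct (Cqpoch_bounded_below q Hq q (Cqpoch_q_neq_0 q Hq)) as [dq [Hdq Hdq']].
  destruct (Cqpoch_shift_bounded_below q Hq A HA) as [dA [HdA HdA']].
  set (E := fun c => exp (c / (1 - Cmod q))).
  assert (HE : forall c, 0 < E c) by (intros; apply exp_pos).
  exists (E (Cmod w) * E (Cmod z) * E 1 / (dq * dA)).
  split; [apply Rlt_le, Rdiv_lt_0_compat; [pose proof (HE (Cmod w)); pose proof (HE (Cmod z));
    pose proof (HE 1); apply Rmult_lt_0_compat; [nra|auto] | nra]|].
  intros j m Hj. rewrite alpha_coef_term_factor by auto.
  pose proof (Cqpoch_q_neq_0 q Hq m). pose proof (Cqpoch_shift_neq_0 A q HA j (j + m)).
  rewrite Cmod_mult, Cmod_div by (apply Cmult_neq_0; auto).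
  rewrite !Cmod_mult, Cmod_pow.
  assert (Hqj : Cmod (q ^ j) <= 1).
  { rewrite Cmod_pow. apply pow_le_1. lra. }
  assert (Hzj : Cmod (z * q ^ j) <= Cmod z) by (apply Cmod_mult_pow_le; auto).
  pose proof (Cmod_Cqpoch_le_exp q Hq w (Cmod w) j (Rle_refl _)) as H1.
  pose proof (Cmod_Cqpoch_le_exp q Hq (z * q ^ j) (Cmod z) m Hzj) as H2.
  pose proof (Cmod_Cqpoch_le_exp q Hq (q ^ j) 1 m Hqj) as H3.
  fold (E (Cmod w)) (E (Cmod z)) (E 1) in H1, H2, H3.
  assert (Hnum : Cmod (Cqpoch w q j) * Cmod (Cqpoch (z * q ^ j) q m) * Cmod (Cqpoch (q ^ j) q m)
                 <= E (Cmod w) * E (Cmod z) * E 1).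
  { repeat apply Rmult_le_compat; auto; try apply Cmod_ge_0; apply Rmult_le_pos; apply Cmod_ge_0. }
  assert (Hden : dq * dA <= Cmod (Cqpoch q q m) * Cmod (Cqpoch (A * q ^ j) q (j + m)))
    by (apply Rmult_le_compat; auto; lra).
  pose proof (Rinv_le_contravar _ _ (Rmult_lt_0_compat _ _ Hdq HdA) Hden) as Hinv.
  pose proof (pow_le (Cmod w) m (Cmod_ge_0 w)).
  replace (E (Cmod w) * E (Cmod z) * E 1 / (dq * dA) * Cmod (alpha_coef j) * Cmod w ^ m)
    with (Cmod (alpha_coef j) * (E (Cmod w) * E (Cmod z) * E 1 * Cmod w ^ m * / (dq * dA)))
    by (unfold Rdiv; ring).
  apply Rmult_le_compat_l; [apply Cmod_ge_0|]. unfold Rdiv.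
  apply Rmult_le_compat; [| apply Rlt_le, Rinv_0_lt_compat, Rmult_lt_0_compat; apply Cmod_gt_0; auto
                          | apply Rmult_le_compat_r; auto | auto].
  repeat apply Rmult_le_pos; auto; apply Cmod_ge_0.
Qed.

Lemma A_sub_z_neq_0 : (A - z)%C <> RtoC 0.
Proof.
  intro E. apply w_neq_1. replace (w - 1)%C with ((A - z) / z)%C by (field; auto).
  rewrite E. unfold Cdiv. ring.
Qed.

Definition alpha_coef_ratio j :=
  ((1 - z * q ^ j) * (1 - q ^ j) * w / ((1 - A * q ^ j) * (1 - w * q ^ j)))%C.
Definition alpha_coef_lambda j := ((1 - alpha_coef_ratio j) / (w - 1))%C.

Lemma alpha_coef_S j : (0 < j)%nat -> (alpha_coef_ratio j * alpha_coef j = alpha_coef (S j))%C.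
Proof.
  intros Hj. destruct j as [|j]; [lia|]. unfold alpha_coef, alpha_coef_ratio. simpl pred.
  rewrite (Cqpoch_S z q (S j)), (Cqpoch_S q q j), (Cqpoch_S A q (S j)), (Cqpoch_S w q (S j)),
    (Cpow_S w (S j)).
  replace (q * q ^ j)%C with (q ^ S j)%C by (rewrite Cpow_S; auto).
  pose proof (A_factor_neq_0 (S j)). pose proof (w_factor_neq_0 (S j)).
  pose proof (HA (S j)). pose proof (HW (S j)).
  field. repeat split; auto using Csub_mult_neq_0.
Qed.

(* The series of [alpha_coef_term (S j)] minus [alpha_coef_ratio j] times that of
   [alpha_coef_term j] telescopes. *)
Lemma alpha_coef_term_recurrence j M : (0 < j)%nat ->
  (alpha_coef_term (S j) M - alpha_coef_ratio j * alpha_coef_term j (S M)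
   = alpha_coef_lambda j * (alpha_coef_term j (S (S M)) * (1 - q ^ (S (S M)))
                            - alpha_coef_term j (S M) * (1 - q ^ (S M))))%C.
Proof.
  intros Hj. destruct j as [|j]; [lia|]. unfold alpha_coef_term, beta_coef.
  set (n := (S j + M)%nat). set (k := (S j + S j + M)%nat).
  replace (S (S j) + M)%nat with (S n) by (unfold n; lia).
  replace (S (S j) + S (S j) + M)%nat with (S (S k)) by (unfold k; lia).
  replace (S j + S M)%nat with (S n) by (unfold n; lia).
  replace (S j + S j + S M)%nat with (S k) by (unfold k; lia).
  replace (S j + S (S M))%nat with (S (S n)) by (unfold n; lia).
  replace (S j + S j + S (S M))%nat with (S (S k)) by (unfold k; lia).
  simpl pred.
  set (p := (q ^ S j)%C). set (u := (q ^ M)%C).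
  assert (Hn : (q ^ n = p * u)%C) by (unfold n, p, u; apply Cpow_add_r).
  assert (Hk : (q ^ k = p * p * u)%C) by (unfold k, p, u; rewrite !Cpow_add_r; ring).
  rewrite (Cqpoch_S z q (S n)), (Cqpoch_S q q (S M)), (Cqpoch_S A q (S k)), (Cqpoch_S q q n),
    (Cqpoch_S q q M).
  rewrite !Cpow_S, Hn, Hk. fold u.
  pose proof (Cqpoch_q_neq_0 q Hq M). pose proof (HA (S k)).
  assert (H1 : (1 - q * u)%C <> RtoC 0) by apply q_factor_neq_0.
  assert (H2 : (1 - q * (q * u))%C <> RtoC 0).
  { replace (q * u)%C with (q ^ S M)%C by (unfold u; rewrite Cpow_S; ring). apply q_factor_neq_0. }
  assert (H3 : (1 - A * (q * (p * p * u)))%C <> RtoC 0).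
  { rewrite <- Hk, <- Cpow_S. apply A_factor_neq_0. }
  pose proof (A_factor_neq_0 (S j)) as H4. pose proof (w_factor_neq_0 (S j)) as H5.
  fold p in H4, H5. unfold alpha_coef_lambda, alpha_coef_ratio. fold p.
  field. repeat split; auto using Csub_mult_neq_0, A_sub_z_neq_0.
Qed.

Lemma alpha_coef_term_recurrence_0 j : (0 < j)%nat ->
  (- alpha_coef_ratio j * alpha_coef_term j 0
   = alpha_coef_lambda j * (alpha_coef_term j 1 * (1 - q ^ 1)))%C.
Proof.
  intros Hj. destruct j as [|j]; [lia|]. unfold alpha_coef_term, beta_coef.
  rewrite !Nat.add_0_r. replace (S j + 1)%nat with (S (S j)) by lia.
  replace (S j + S j + 1)%nat with (S (S j + S j)) by lia.
  simpl pred.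
  set (p := (q ^ S j)%C). set (k := (S j + S j)%nat).
  assert (Hk : (q ^ k = p * p)%C) by (unfold k, p; apply Cpow_add_r).
  rewrite (Cqpoch_S z q (S j)), (Cqpoch_S A q k), (Cqpoch_S q q j), (Cpow_S w (S j)), Hk.
  replace (q * q ^ j)%C with p by (unfold p; rewrite Cpow_S; auto).
  change (Cqpoch q q 0) with (RtoC 1). simpl (Cqpoch q q 1). simpl (q ^ 1)%C.
  pose proof (HA k). pose proof (Cqpoch_q_neq_0 q Hq j).
  assert (H1 : (1 - q * 1)%C <> RtoC 0).
  { replace (q * 1)%C with (q ^ 1)%C by (simpl; ring). apply one_sub_pow_neq_0; auto. }
  assert (H3 : (1 - A * (p * p))%C <> RtoC 0) by (rewrite <- Hk; apply A_factor_neq_0).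
  pose proof (A_factor_neq_0 (S j)) as H4. pose proof (w_factor_neq_0 (S j)) as H5.
  fold p in H4, H5. unfold alpha_coef_lambda, alpha_coef_ratio. fold p.
  field. rewrite Cmult_1_r in H1. repeat split; auto using Csub_mult_neq_0, A_sub_z_neq_0.
Qed.

Lemma Csum_alpha_coef_term_recurrence j M : (0 < j)%nat ->
  (Csum (alpha_coef_term (S j)) M - alpha_coef_ratio j * Csum (alpha_coef_term j) (S M)
   = alpha_coef_lambda j * (alpha_coef_term j (S M) * (1 - q ^ (S M))))%C.
Proof.
  intros Hj. induction M.
  - simpl. rewrite <- alpha_coef_term_recurrence_0 by auto. ring.
  - change (Csum ?f (S ?n)) with (Csum f n + f n)%C.
    pose proof (alpha_coef_term_recurrence j M Hj) as H.
    transitivity (Csum (alpha_coef_term (S j)) M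
      - alpha_coef_ratio j * Csum (alpha_coef_term j) (S M)
      + (alpha_coef_term (S j) M - alpha_coef_ratio j * alpha_coef_term j (S M)))%C;
      [simpl; ring|].
    rewrite IHM, H. ring.
Qed.

Lemma alpha_coef_series_1 : Cn_cv (Csum (alpha_coef_term 1)) (alpha_coef 1).
Proof.
  pose proof (Cmod_w_range q a z Hw) as Hw'.
  assert (Hw1 : (1 - w)%C <> RtoC 0).
  { intro E. apply w_neq_1. replace (w - 1)%C with (- (1 - w))%C by ring. rewrite E. ring. }
  assert (HzA : (z - A)%C <> RtoC 0).
  { replace (z - A)%C with (z - A * q ^ 0)%C by (simpl; ring).
    apply Csub_mult_neq_0; [exact Hz | apply w_factor_neq_0]. }
  set (tau := fun m => (Cqpoch z q (S m) * w ^ (S m) / Cqpoch A q (S m))%C).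
  assert (Htel : forall m, (tau m - tau (S m) = (1 - w) * alpha_coef_term 1 m)%C).
  { intros m. unfold tau, alpha_coef_term, beta_coef.
    replace (1 + m)%nat with (S m) by lia. replace (1 + 1 + m)%nat with (S (S m)) by lia.
    simpl pred. rewrite (Cqpoch_S z q (S m)), (Cqpoch_S A q (S m)), (Cpow_S w (S m)).
    pose proof (A_factor_neq_0 (S m)). pose proof (HA (S m)). pose proof (Cqpoch_q_neq_0 q Hq m).
    field. repeat split; auto. }
  apply (Cn_cv_ext (fun M => / (1 - w) * (tau O - tau M))%C).
  { intros M. rewrite <- Csum_telescope, <- Csum_scal. apply Csum_ext. intros. rewrite Htel.
    field. auto. }
  replace (alpha_coef 1) with (/ (1 - w) * (tau O - 0))%C.
  2:{ unfold alpha_coef, tau. simpl. pose proof (A_factor_neq_0 0). simpl in H.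
      field. repeat split; auto. rewrite Cmult_1_r in H. auto. }
  apply Cn_cv_scal, Cn_cv_minus; [apply Cn_cv_const|].
  pose proof (fun n => Cmod_Cqpoch_le_exp q Hq z (Cmod z) n (Rle_refl _)) as HKz.
  set (Kz := exp (Cmod z / (1 - Cmod q))) in HKz.
  destruct (Cqpoch_bounded_below q Hq A HA) as [dA [HdA HdA']].
  apply (Cn_cv_geom_bound _ (Kz / dA) (Cmod w)); auto.
  intros M. unfold tau. rewrite Cmod_div by auto. rewrite Cmod_mult, Cmod_pow.
  pose proof (Rinv_le_contravar _ _ HdA (HdA' (S M))).
  assert (Cmod w ^ S M <= Cmod w ^ M) by (apply pow_le_antimono; [lra|lia]).
  unfold Rdiv. replace (Kz * / dA * Cmod w ^ M) with (Kz * Cmod w ^ M * / dA) by ring.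
  apply Rmult_le_compat; [apply Rmult_le_pos; [apply Cmod_ge_0 | apply pow_le; lra]
    | apply Rlt_le, Rinv_0_lt_compat, Rlt_le_trans with dA; auto | | auto].
  apply Rmult_le_compat; auto; [apply Cmod_ge_0 | apply pow_le; lra].
Qed.

Lemma alpha_coef_series j : (0 < j)%nat -> Cn_cv (Csum (alpha_coef_term j)) (alpha_coef j).
Proof.
  intros Hj. induction j as [|j IH]; [lia|]. destruct j as [|j]; [apply alpha_coef_series_1|].
  specialize (IH ltac:(lia)).
  destruct Cmod_alpha_coef_term_le as [K [HK HK']].
  pose proof (Cmod_w_range q a z Hw) as Hw'. pose proof (Cmod_q_range q Hq).
  apply (Cn_cv_ext (fun M => alpha_coef_ratio (S j) * Csum (alpha_coef_term (S j)) (S M)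
    + alpha_coef_lambda (S j) * (alpha_coef_term (S j) (S M) * (1 - q ^ (S M))))%C).
  { intros M. rewrite <- Csum_alpha_coef_term_recurrence by lia. ring. }
  rewrite <- alpha_coef_S by lia.
  replace (alpha_coef_ratio (S j) * alpha_coef (S j))%C
    with (alpha_coef_ratio (S j) * alpha_coef (S j) + alpha_coef_lambda (S j) * 0)%C by ring.
  apply Cn_cv_plus; apply Cn_cv_scal; [apply (Cn_cv_shift (Csum (alpha_coef_term (S j)))); auto|].
  apply (Cn_cv_geom_bound _ (K * Cmod (alpha_coef (S j)) * 2) (Cmod w)); auto.
  intros M. rewrite Cmod_mult.
  pose proof (Cmod_1_sub_le (q ^ S M)) as H1. rewrite Cmod_pow in H1.
  pose proof (pow_le_1 (Cmod q) (S M) ltac:(lra)).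
  pose proof (HK' (S j) (S M) ltac:(lia)).
  assert (Cmod w ^ S M <= Cmod w ^ M) by (apply pow_le_antimono; [lra|lia]).
  assert (0 <= K * Cmod (alpha_coef (S j))) by (apply Rmult_le_pos; [lra | apply Cmod_ge_0]).
  apply Rle_trans with (K * Cmod (alpha_coef (S j)) * Cmod w ^ S M * 2).
  - apply Rmult_le_compat; auto; try apply Cmod_ge_0. lra.
  - pose proof (pow_le (Cmod w) (S M) ltac:(lra)). nra.
Qed.

Lemma alpha_coef_series_tail : exists K, 0 <= K /\ forall j M, (0 < j)%nat ->
  Cmod (Csum (alpha_coef_term j) M - alpha_coef j) <= K * Cmod (alpha_coef j) * Cmod w ^ M.
Proof.
  destruct Cmod_alpha_coef_term_le as [K [HK HK']].
  pose proof (Cmod_w_range q a z Hw) as Hw'.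
  exists (K / (1 - Cmod w)).
  split; [apply Rmult_le_pos; [lra | apply Rlt_le, Rinv_0_lt_compat; lra]|].
  intros j M Hj. rewrite Cmod_sub_sym.
  apply (Cn_cv_dist_le_eventually _ _ _ _ M (alpha_coef_series j Hj)).
  intros n Hn. replace n with (M + (n - M))%nat by lia. rewrite Csum_add.
  replace (Csum (alpha_coef_term j) M + Csum (fun i => alpha_coef_term j (M + i)) (n - M)
           - Csum (alpha_coef_term j) M)%C
    with (Csum (fun i => alpha_coef_term j (M + i)) (n - M)) by ring.
  eapply Rle_trans; [apply Cmod_Csum_le|].
  eapply Rle_trans;
    [apply (Rsum_le _ (fun i => K * Cmod (alpha_coef j) * Cmod w ^ M * Cmod w ^ i))|].
  { intros i _. rewrite Rmult_assoc, <- pow_add. apply HK'; auto. }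
  rewrite Rsum_scal. pose proof (Rsum_geom_le (Cmod w) (n - M) Hw').
  assert (0 <= K * Cmod (alpha_coef j) * Cmod w ^ M)
    by (repeat apply Rmult_le_pos; [lra | apply Cmod_ge_0 | apply pow_le; lra]).
  replace (K / (1 - Cmod w) * Cmod (alpha_coef j) * Cmod w ^ M)
    with (K * Cmod (alpha_coef j) * Cmod w ^ M * (1 / (1 - Cmod w))) by (field; lra).
  apply Rmult_le_compat_l; auto.
Qed.

Definition bailey_inner_sum N :=
  Csum (fun i => alpha (S i) * Csum (alpha_coef_term (S i)) (N - i))%C N.

Lemma T1_term_expand N : T1_term N
  = (F2_term N + Csum (fun i => alpha (S i) * alpha_coef_term (S i) (N - i)) (S N))%C.
Proof.
  unfold T1_term. rewrite Hbeta, Csum_S_l, Halpha0, Cmult_plus_distr_l by lia. f_equal.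
  - unfold F2_term. rewrite Nat.sub_0_r, Nat.add_0_r. simpl (Cqpoch q q (S N)).
    replace (q * q ^ N)%C with (q ^ S N)%C by (rewrite Cpow_S; ring).
    pose proof (one_sub_pow_neq_0 q Hq (S N) ltac:(lia)). pose proof (Cqpoch_q_neq_0 q Hq N).
    field. repeat split; auto.
  - rewrite <- Csum_scal. apply Csum_ext. intros i Hi. unfold alpha_coef_term, beta_coef.
    replace (S i + (N - i))%nat with (S N) by lia.
    replace (S i + S i + (N - i))%nat with (S N + S i)%nat by lia.
    simpl pred. replace (S N - S i)%nat with (N - i)%nat by lia.
    field. split; auto. apply Cqpoch_q_neq_0; auto.
Qed.

Lemma bailey_inner_sum_S N : bailey_inner_sum (S N)
  = (bailey_inner_sum N + Csum (fun i => alpha (S i) * alpha_coef_term (S i) (N - i)) (S N))%C.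
Proof.
  unfold bailey_inner_sum. change (Csum ?f (S N)) with (Csum f N + f N)%C at 1.
  rewrite (Csum_ext (fun i => alpha (S i) * Csum (alpha_coef_term (S i)) (S N - i))%C
    (fun i => alpha (S i) * Csum (alpha_coef_term (S i)) (N - i)
              + alpha (S i) * alpha_coef_term (S i) (N - i))%C).
  2:{ intros i Hi. replace (S N - i)%nat with (S (N - i)) by lia. simpl. ring. }
  rewrite Csum_plus. replace (S N - N)%nat with 1%nat by lia.
  simpl. rewrite Nat.sub_diag. ring.
Qed.

Lemma Csum_T1_term N : Csum T1_term N = (Csum F2_term N + bailey_inner_sum N)%C.
Proof.
  induction N; [unfold bailey_inner_sum; simpl; ring|].
  simpl. rewrite IHN, bailey_inner_sum_S, T1_term_expand. ring.
Qed.

Definition bailey_error N :=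
  Csum (fun i => alpha (S i) * (Csum (alpha_coef_term (S i)) (N - i) - alpha_coef (S i)))%C N.

Lemma T2_term_alpha_coef k : T2_term k = (alpha (S k) * alpha_coef (S k))%C.
Proof. unfold T2_term, alpha_coef. simpl pred. ring. Qed.

Lemma Csum_T1_sub_T2 N : (Csum T1_term N - Csum T2_term N = Csum F2_term N + bailey_error N)%C.
Proof.
  rewrite Csum_T1_term. unfold bailey_inner_sum, bailey_error.
  rewrite (Csum_ext T2_term (fun i => alpha (S i) * alpha_coef (S i))%C)
    by (intros; apply T2_term_alpha_coef).
  rewrite (Csum_ext
    (fun i => alpha (S i) * (Csum (alpha_coef_term (S i)) (N - i) - alpha_coef (S i)))%C
    (fun i => alpha (S i) * Csum (alpha_coef_term (S i)) (N - i)
              - alpha (S i) * alpha_coef (S i))%C)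
    by (intros; ring).
  rewrite Csum_minus. ring.
Qed.

Lemma bailey_error_lim : (exists l, Un_cv (sum_f_R0 (fun k => Cmod (T2_term k))) l) ->
  Cn_cv bailey_error (RtoC 0).
Proof.
  intros [l Hl]. destruct alpha_coef_series_tail as [K [HK HK']].
  pose proof (Cmod_w_range q a z Hw) as Hw'.
  intros eps He.
  destruct (Rsum_geom_convolution_lim _ l (Cmod w) (fun k => Cmod_ge_0 _) Hl Hw' (eps / (K + 1)))
    as [N0 HN0]; [apply Rdiv_lt_0_compat; lra|].
  exists N0. intros N HN. replace (bailey_error N - 0)%C with (bailey_error N) by ring.
  eapply Rle_lt_trans; [apply Cmod_Csum_le|].
  eapply Rle_lt_trans;
    [apply (Rsum_le _ (fun i => (K + 1) * (Cmod (T2_term i) * Cmod w ^ (N - i))))|].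
  - intros i Hi. rewrite Cmod_mult, T2_term_alpha_coef, Cmod_mult.
    pose proof (HK' (S i) (N - i)%nat ltac:(lia)).
    pose proof (Cmod_ge_0 (alpha (S i))). pose proof (Cmod_ge_0 (alpha_coef (S i))).
    pose proof (pow_le (Cmod w) (N - i) ltac:(lra)).
    assert (0 <= Cmod (alpha (S i)) * Cmod (alpha_coef (S i)) * Cmod w ^ (N - i))
      by (repeat apply Rmult_le_pos; auto).
    apply Rle_trans with (Cmod (alpha (S i)) * (K * Cmod (alpha_coef (S i)) * Cmod w ^ (N - i)));
      [apply Rmult_le_compat_l; auto | nra].
  - rewrite Rsum_scal. specialize (HN0 N HN).
    replace eps with ((K + 1) * (eps / (K + 1))) by (field; lra).
    apply Rmult_lt_compat_l; lra.
Qed.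

Theorem bailey_T1_sub_T2 s1 s2 f2 :
  (exists l, Un_cv (sum_f_R0 (fun k => Cmod (T2_term k))) l) ->
  Cn_cv (Csum T1_term) s1 -> Cn_cv (Csum T2_term) s2 -> Cn_cv (Csum F2_term) f2 ->
  (s1 - s2)%C = f2.
Proof.
  intros Habs H1 H2 H3.
  pose proof (Cn_cv_plus _ _ _ _ H3 (bailey_error_lim Habs)) as H4.
  replace (f2 + 0)%C with f2 in H4 by ring.
  apply (Cn_cv_unique _ _ _ (Cn_cv_minus _ _ _ _ H1 H2)).
  eapply Cn_cv_ext; [|apply H4]. intros. simpl. rewrite Csum_T1_sub_T2. auto.
Qed.

End Bailey.

(** * The unit Bailey pair *)

Definition tri n := (n * (n - 1) / 2)%nat.

Lemma tri_S k : tri (S k) = (tri k + k)%nat.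
Proof.
  unfold tri. replace (S k * (S k - 1))%nat with (k * (k - 1) + k * 2)%nat.
  - rewrite Nat.div_add by lia. auto.
  - destruct k; simpl; [auto|]. rewrite Nat.sub_0_r. nia.
Qed.

Lemma mul_succ_div2 n : (n * (n + 1) / 2)%nat = (tri n + n)%nat.
Proof. rewrite <- tri_S. unfold tri. f_equal. simpl. nia. Qed.

Section UnitBaileyPair.
Variables q a : C.
Hypothesis Hq : Cmod q < 1.
Hypothesis HA : forall n, Cqpoch (q * a) q n <> RtoC 0.
Hypothesis Ha1 : (1 - a)%C <> RtoC 0.

Local Notation A := (q * a)%C.

(* Together with [beta n = [n = 0]], this is the unit Bailey pair relative to [a]. *)
Definition unit_alpha n := ((1 - a * q ^ (n + n)) * Cqpoch a q n * (- (1)) ^ n * q ^ (tri n)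
  / ((1 - a) * Cqpoch q q n))%C.

Lemma unit_alpha_0 : unit_alpha O = RtoC 1.
Proof. unfold unit_alpha. simpl. field. exact Ha1. Qed.

Definition unit_bailey_term n j := (unit_alpha j / (Cqpoch q q (n - j) * Cqpoch A q (n + j)))%C.

(* The closed form of the partial sums over [j <= k]; it vanishes at [k = n]. *)
Definition unit_bailey_partial n k :=
  ((- (1)) ^ k * q ^ (tri k + k) * Cqpoch A q k * (1 - q ^ (n - k))
  / (Cqpoch q q k * Cqpoch q q (n - k) * Cqpoch A q (n + k) * (1 - q ^ n)))%C.

Lemma unit_bailey_partial_S k r :
  (unit_bailey_partial (S k + r) k + unit_bailey_term (S k + r) (S k)
   = unit_bailey_partial (S k + r) (S k))%C.
Proof.
  unfold unit_bailey_partial, unit_bailey_term, unit_alpha.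
  replace (S k + r - k)%nat with (S r) by lia. replace (S k + r - S k)%nat with r by lia.
  rewrite tri_S. replace (tri k + k + S k)%nat with (tri k + k + k + 1)%nat by lia.
  replace (S k + r + S k)%nat with (S (S k + r + k)) by lia.
  rewrite (Cqpoch_S A q (S k + r + k)), (Cqpoch_S_l a q k), (Cmult_comm a q), (Cqpoch_S A q k),
    (Cqpoch_S q q k), (Cqpoch_S q q r).
  set (p := (q ^ k)%C). set (u := (q ^ r)%C). set (T := (q ^ tri k)%C).
  assert (E1 : (q ^ (S k + r + k) = q * p * p * u)%C)
    by (unfold p, u; rewrite !Cpow_add_r; simpl; ring).
  assert (E2 : (q ^ (tri k + k + k + 1) = T * p * p * q)%C)
    by (unfold T, p; rewrite !Cpow_add_r; simpl; ring).
  assert (E3 : (q ^ (tri k + k) = T * p)%C) by (unfold T, p; rewrite !Cpow_add_r; ring).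
  assert (E4 : (q ^ (S k + r) = q * p * u)%C) by (unfold p, u; rewrite !Cpow_add_r; simpl; ring).
  assert (E5 : (q ^ (S r) = q * u)%C) by (unfold u; simpl; ring).
  assert (E6 : (q ^ (S k + S k) = q * q * p * p)%C)
    by (unfold p; rewrite !Cpow_add_r; simpl; ring).
  pose proof (one_sub_pow_neq_0 q Hq (S r) ltac:(lia)) as H1.
  pose proof (one_sub_pow_neq_0 q Hq (S k + r) ltac:(lia)) as H2.
  pose proof (one_sub_pow_neq_0 q Hq (S k) ltac:(lia)) as H3.
  pose proof (Cqpoch_factor_neq_0 A q HA (S k + r + k)) as H4.
  rewrite E1, E2, E3, E4, E5, E6, Cpow_S. rewrite E1 in H4. rewrite E4 in H2. rewrite E5 in H1.
  replace (q ^ S k)%C with (q * p)%C in H3 by (unfold p; simpl; ring).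
  pose proof (Cqpoch_q_neq_0 q Hq k). pose proof (Cqpoch_q_neq_0 q Hq r).
  pose proof (HA (S k + r + k)%nat).
  field. repeat split; auto.
Qed.

Lemma Csum_unit_bailey_term n k : (0 < n)%nat -> (k <= n)%nat ->
  Csum (unit_bailey_term n) (S k) = unit_bailey_partial n k.
Proof.
  intros Hn Hk. induction k.
  - simpl. unfold unit_bailey_term, unit_bailey_partial. rewrite unit_alpha_0.
    rewrite !Nat.sub_0_r, Nat.add_0_r. simpl.
    pose proof (Cqpoch_q_neq_0 q Hq n). pose proof (one_sub_pow_neq_0 q Hq n Hn).
    field. repeat split; auto.
  - change (Csum ?f (S (S k))) with (Csum f (S k) + f (S k))%C. rewrite IHk by lia.
    replace n with (S k + (n - S k))%nat by lia. apply unit_bailey_partial_S.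
Qed.

Lemma unit_bailey_relation n : (0 < n)%nat -> Csum (unit_bailey_term n) (S n) = RtoC 0.
Proof.
  intros Hn. rewrite Csum_unit_bailey_term by auto. unfold unit_bailey_partial.
  rewrite Nat.sub_diag. simpl. unfold Cdiv. ring.
Qed.

Variables sa z : C.
Hypothesis Hsa : (sa * sa)%C = a.
Hypothesis Hz : z <> RtoC 0.
Hypothesis HW : forall n, Cqpoch (q * a / z) q n <> RtoC 0.
Hypothesis Hs3 : forall n, Cqpoch sa q n <> RtoC 0.
Hypothesis Hs4 : forall n, Cqpoch (- sa) q n <> RtoC 0.

Lemma Cqpoch_sqrt_prod n : (Cqpoch (q * sa) q n * Cqpoch (- (q * sa)) q n * (1 - a)
  = (1 - a * q ^ (n + n)) * Cqpoch sa q n * Cqpoch (- sa) q n)%C.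
Proof.
  induction n; [simpl; ring|]. simpl Cqpoch.
  transitivity (Cqpoch (q * sa) q n * Cqpoch (- (q * sa)) q n * (1 - a)
                * ((1 - q * sa * q ^ n) * (1 + q * sa * q ^ n)))%C; [ring|].
  rewrite IHn, <- Hsa. replace (S n + S n)%nat with (S (S (n + n))) by lia.
  rewrite !Cpow_S, !Cpow_add_r. ring.
Qed.

Definition F1_term k :=
  (Cqpoch (q * sa) q (S k) * Cqpoch (- (q * sa)) q (S k) * Cqpoch a q (S k) * Cqpoch z q (S k)
   * q ^ ((S k * (S k + 1)) / 2)
   / (Cqpoch sa q (S k) * Cqpoch (- sa) q (S k) * Cqpoch A q (S k)
      * Cqpoch (q * a / z) q (S k) * (1 - q ^ (S k)))
   * (- a / z) ^ (S k))%C.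

Lemma T2_term_unit_alpha k : T2_term q a z unit_alpha k = F1_term k.
Proof.
  unfold T2_term, F1_term, unit_alpha. rewrite mul_succ_div2.
  set (n := S k).
  assert (HP : (Cqpoch (q * sa) q n * Cqpoch (- (q * sa)) q n
                = (1 - a * q ^ (n + n)) * Cqpoch sa q n * Cqpoch (- sa) q n / (1 - a))%C).
  { rewrite <- Cqpoch_sqrt_prod. field. auto. }
  rewrite HP. unfold n. rewrite (Cqpoch_S q q k).
  replace (q * q ^ k)%C with (q ^ S k)%C by (rewrite Cpow_S; auto).
  replace (q * a / z)%C with (q * (a / z))%C at 2 by (field; auto).
  replace (- a / z)%C with (- (1) * (a / z))%C by (field; auto).
  rewrite !Cpow_mult_l.
  fold n. rewrite (Cpow_add_r q (tri n) n), (Cpow_add_r q n n).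
  assert (H1 : Cqpoch sa q n <> RtoC 0) by auto.
  assert (H2 : Cqpoch (- sa) q n <> RtoC 0) by auto.
  assert (H3 : Cqpoch A q n <> RtoC 0) by auto.
  assert (H4 : Cqpoch (q * a / z) q n <> RtoC 0) by auto.
  assert (H5 : (1 - q ^ n)%C <> RtoC 0) by (apply one_sub_pow_neq_0; auto; unfold n; lia).
  assert (H6 : Cqpoch q q k <> RtoC 0) by (apply Cqpoch_q_neq_0; auto).
  field. repeat split; auto.
Qed.

End UnitBaileyPair.

Theorem F2_eq_neg_F1 (q a z sa f1 f2 : C) :
  Cmod q < 1 -> z <> RtoC 0 -> Cmod (q * a / z) < 1 -> (sa * sa)%C = a ->
  (forall n, Cqpoch (q * a) q n <> RtoC 0) -> (forall n, Cqpoch (q * a / z) q n <> RtoC 0) ->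
  (forall n, Cqpoch sa q n <> RtoC 0) -> (forall n, Cqpoch (- sa) q n <> RtoC 0) ->
  (exists l, Un_cv (sum_f_R0 (fun k => Cmod (F1_term q a sa z k))) l) ->
  Cn_cv (Csum (F1_term q a sa z)) f1 -> Cn_cv (Csum (F2_term q a z)) f2 ->
  f2 = (- f1)%C.
Proof.
  intros Hq Hz Hw Hsa HA HW Hs3 Hs4 [l Hl] H1 H2.
  assert (Ha1 : (1 - a)%C <> RtoC 0).
  { replace (1 - a)%C with (Cqpoch sa q 1 * Cqpoch (- sa) q 1)%C by (rewrite <- Hsa; simpl; ring).
    apply Cmult_neq_0; auto. }
  set (delta := fun n : nat => match n with O => RtoC 1 | S _ => RtoC 0 end).
  assert (E : (RtoC 0 - f1)%C = f2).
  { apply (bailey_T1_sub_T2 q a z (unit_alpha q a) delta Hq Hz Hw HA HW (unit_alpha_0 q a Ha1)).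
    - intros [|n] Hn; [lia|]. symmetry. apply (unit_bailey_relation q a Hq HA Ha1); lia.
    - exists l. eapply Un_cv_ext; [|exact Hl]. intros n. apply sum_eq. intros k _.
      rewrite (T2_term_unit_alpha q a Hq HA Ha1 sa z); auto.
    - apply (Cn_cv_ext (fun _ => RtoC 0)); [|apply Cn_cv_const]. intros N.
      rewrite <- (Csum_zero N). apply Csum_ext. intros. unfold T1_term, delta. ring.
    - eapply Cn_cv_ext; [|apply H1]. intros N. apply Csum_ext. intros k _.
      symmetry. apply (T2_term_unit_alpha q a Hq HA Ha1 sa z); auto.
    - auto. }
  rewrite <- E. ring.
Qed.

Theorem bailey_pair_lambert (q a z sa : C) (alpha beta : nat -> C) (s1 s2 f1 f2 f3 f4 : C) :
  Cmod q < 1 -> z <> RtoC 0 -> Cmod (q * a / z) < 1 -> (sa * sa)%C = a ->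
  (forall n, Cqpoch (q * a) q n <> RtoC 0) -> (forall n, Cqpoch (q * a / z) q n <> RtoC 0) ->
  (forall n, Cqpoch sa q n <> RtoC 0) -> (forall n, Cqpoch (- sa) q n <> RtoC 0) ->
  alpha O = RtoC 1 ->
  (forall n, (0 < n)%nat ->
    beta n = Csum (fun j => alpha j / (Cqpoch q q (n - j) * Cqpoch (q * a) q (n + j)))%C (S n)) ->
  (exists l, Un_cv (sum_f_R0 (fun k => Cmod (T2_term q a z alpha k))) l) ->
  (exists l, Un_cv (sum_f_R0 (fun k => Cmod (F1_term q a sa z k))) l) ->
  Cn_cv (Csum (T1_term q a z beta)) s1 -> Cn_cv (Csum (T2_term q a z alpha)) s2 ->
  Cn_cv (Csum (F1_term q a sa z)) f1 -> Cn_cv (Csum (F2_term q a z)) f2 ->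
  Cn_cv (Csum (fun k => a * q ^ (S k) / z / (1 - a * q ^ (S k) / z)))%C f3 ->
  Cn_cv (Csum (fun k => a * q ^ (S k) / (1 - a * q ^ (S k))))%C f4 ->
  (s1 - s2)%C = f2 /\ f2 = (- f1)%C /\ f2 = (f3 - f4)%C.
Proof.
  intros Hq Hz Hw Hsa HA HW Hs3 Hs4 Halpha0 Hbeta HT2 HF1 H1 H2 H3 H4 H5 H6.
  split; [|split].
  - apply (bailey_T1_sub_T2 q a z alpha beta); auto.
  - apply (F2_eq_neg_F1 q a z sa); auto.
  - apply (F2_lambert q a z); auto.
Qed.

(* Imported only here: it shadows Coquelicot's [Cmod], [RtoC] and [%C] notations. *)
From Pilot Require Import Defs.

Definition toC (x : Cplx) : Complex.C := (Defs.Re x, Defs.Im x).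

Lemma toC_inj x y : toC x = toC y -> x = y.
Proof. destruct x, y. unfold toC. simpl. intros H. inversion H. auto. Qed.

Lemma toC_add x y : toC (Cadd x y) = Complex.Cplus (toC x) (toC y).
Proof. reflexivity. Qed.
Lemma toC_mul x y : toC (Cmul x y) = Complex.Cmult (toC x) (toC y).
Proof. reflexivity. Qed.
Lemma toC_opp x : toC (Copp x) = Complex.Copp (toC x).
Proof. reflexivity. Qed.
Lemma toC_sub x y : toC (Csub x y) = Complex.Cminus (toC x) (toC y).
Proof. reflexivity. Qed.
Lemma toC_inv x : toC (Defs.Cinv x) = Complex.Cinv (toC x).
Proof.
  unfold toC, Defs.Cinv, Complex.Cinv. simpl. f_equal; unfold Rdiv; f_equal; f_equal; ring.
Qed.
Lemma toC_div x y : toC (Defs.Cdiv x y) = Complex.Cdiv (toC x) (toC y).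
Proof. unfold Defs.Cdiv. rewrite toC_mul, toC_inv. reflexivity. Qed.
Lemma toC_one : toC Cone = Complex.RtoC 1.
Proof. reflexivity. Qed.
Lemma toC_zero : toC Czero = Complex.RtoC 0.
Proof. reflexivity. Qed.
Lemma toC_pow x n : toC (Defs.Cpow x n) = Complex.Cpow (toC x) n.
Proof. induction n; simpl; [reflexivity|]. rewrite toC_mul, IHn. apply Cmult_comm. Qed.
Lemma toC_qpoch x q n : toC (qpoch x q n) = Cqpoch (toC x) (toC q) n.
Proof.
  induction n; simpl; [reflexivity|]. rewrite toC_mul, toC_sub, toC_mul, toC_pow, IHn. reflexivity.
Qed.
Lemma toC_psum f N : toC (Cpsum f N) = Csum (fun k => toC (f k)) N.
Proof. induction N; simpl; [reflexivity|]. rewrite toC_add, IHN. reflexivity. Qed.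

Hint Rewrite toC_add toC_mul toC_opp toC_sub toC_div toC_one toC_zero toC_pow toC_qpoch toC_psum
  : toC.

Lemma Cmod_toC x : Defs.Cmod x = Complex.Cmod (toC x).
Proof. unfold Defs.Cmod, Complex.Cmod, toC. simpl. f_equal. ring. Qed.

Lemma toC_neq_0 x : x <> Czero -> toC x <> Complex.RtoC 0.
Proof. intros H E. apply H. apply toC_inj. rewrite E. reflexivity. Qed.

Lemma Cmod_le_abs (x y : R) : Complex.Cmod (x, y) <= Rabs x + Rabs y.
Proof.
  pose proof (Complex.Cmod_ge_0 (x, y)). pose proof (Rabs_pos x). pose proof (Rabs_pos y).
  assert (E : Complex.Cmod (x, y) ^ 2 = Rabs x ^ 2 + Rabs y ^ 2).
  { unfold Complex.Cmod. simpl fst. simpl snd. rewrite pow2_sqrt by nra.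
    rewrite <- !Rsqr_pow2, <- !Rsqr_abs. unfold Rsqr. ring. }
  nra.
Qed.

Lemma Cseries_sum_Cn_cv f g s :
  (forall k, toC (f k) = g k) -> Cseries_sum f s -> Cn_cv (Csum g) (toC s).
Proof.
  intros Hfg [Hre Him] eps He.
  destruct (Hre (eps / 2)) as [N1 HN1]; [lra|]. destruct (Him (eps / 2)) as [N2 HN2]; [lra|].
  exists (max N1 N2). intros n Hn.
  pose proof (Nat.le_max_l N1 N2). pose proof (Nat.le_max_r N1 N2).
  specialize (HN1 n ltac:(lia)). specialize (HN2 n ltac:(lia)). unfold R_dist in *.
  rewrite <- (Csum_ext (fun k => toC (f k))) by auto.
  rewrite <- toC_psum, <- toC_sub. unfold toC at 1.
  eapply Rle_lt_trans; [apply Cmod_le_abs|].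
  unfold Csub, Cadd, Copp in *. simpl. unfold Rminus in *. lra.
Qed.

Lemma Cabs_conv_toC f g : (forall k, toC (f k) = g k) -> Cabs_conv f ->
  exists l, Un_cv (sum_f_R0 (fun k => Complex.Cmod (g k))) l.
Proof.
  intros Hfg [l Hl]. exists l. eapply Un_cv_ext; [|exact Hl]. intros n.
  apply sum_eq. intros k _. rewrite Cmod_toC, Hfg. reflexivity.
Qed.

Ltac transfer_neq_0 H :=
  let H' := fresh in pose proof (toC_neq_0 _ H) as H'; autorewrite with toC in H'; exact H'.

Ltac transfer_term f := intros k; unfold f; autorewrite with toC;
  try replace (S k - 1)%nat with k by lia; reflexivity.

Theorem theorem3p1
  (q a z sa : Cplx) (alpha beta : nat -> Cplx)
  (Hq : Cmod q < 1)
  (Hbp : bailey_pair a q alpha beta)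
  (Haz : Cmod (q * a)%C < Cmod z)
  (Hsa : (sa * sa)%C = a)
  (Hz : z <> Czero)
  (Hd1 : forall n, qpoch (q * a)%C q n <> Czero)
  (Hd2 : forall n, qpoch (q * a / z)%C q n <> Czero)
  (Hd3 : forall n, qpoch sa q n <> Czero)
  (Hd4 : forall n, qpoch (- sa)%C q n <> Czero)
  (Hd5 : forall n, (0 < n)%nat -> (Cone - q ^ n)%C <> Czero)
  (Hd6 : forall n, (0 < n)%nat -> (Cone - a * q ^ n / z)%C <> Czero)
  (Hd7 : forall n, (0 < n)%nat -> (Cone - a * q ^ n)%C <> Czero) :
  let T1 := fun k => let n := S k in
      (qpoch z q n * qpoch q q (n - 1) * (q * a / z) ^ n * beta n)%C in
  let T2 := fun k => let n := S k in
      (qpoch z q n * qpoch q q (n - 1)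
        / (qpoch (q * a) q n * qpoch (q * a / z) q n)
        * (q * a / z) ^ n * alpha n)%C in
  let F1 := fun k => let n := S k in
      (qpoch (q * sa) q n * qpoch (- (q * sa)) q n * qpoch a q n * qpoch z q n
        * q ^ ((n * (n + 1)) / 2)
        / (qpoch sa q n * qpoch (- sa) q n * qpoch (q * a) q n
             * qpoch (q * a / z) q n * (Cone - q ^ n))
        * (- a / z) ^ n)%C in
  let F2 := fun k => let n := S k in
      (qpoch z q n / (qpoch (q * a) q n * (Cone - q ^ n)) * (q * a / z) ^ n)%C in
  let F3 := fun k => let n := S k in
      (a * q ^ n / z / (Cone - a * q ^ n / z))%C in
  let F4 := fun k => let n := S k in
      (a * q ^ n / (Cone - a * q ^ n))%C in
  Cabs_conv T1 -> Cabs_conv T2 -> Cabs_conv F1 ->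
  Cabs_conv F2 -> Cabs_conv F3 -> Cabs_conv F4 ->
  forall s1 s2 f1 f2 f3 f4 : Cplx,
  Cseries_sum T1 s1 -> Cseries_sum T2 s2 -> Cseries_sum F1 f1 ->
  Cseries_sum F2 f2 -> Cseries_sum F3 f3 -> Cseries_sum F4 f4 ->
  (s1 - s2)%C = f2 /\ f2 = (- f1)%C /\ f2 = (f3 - f4)%C.
Proof.
  intros T1 T2 F1 F2 F3 F4 _ HT2 HF1 _ _ _ s1 s2 f1 f2 f3 f4 H1 H2 H3 H4 H5 H6.
  destruct Hbp as [Halpha0 [_ Hbeta]].
  rewrite Cmod_toC in Hq. rewrite !Cmod_toC in Haz. autorewrite with toC in Haz.
  apply toC_neq_0 in Hz.
  destruct (bailey_pair_lambert (toC q) (toC a) (toC z) (toC sa)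
    (fun n => toC (alpha n)) (fun n => toC (beta n))
    (toC s1) (toC s2) (toC f1) (toC f2) (toC f3) (toC f4)) as [E1 [E2 E3]].
  - exact Hq.
  - exact Hz.
  - rewrite Cmod_div by exact Hz. apply Rlt_div_l; [apply Cmod_gt_0|]; auto. lra.
  - rewrite <- toC_mul, Hsa. reflexivity.
  - intros n. transfer_neq_0 (Hd1 n).
  - intros n. transfer_neq_0 (Hd2 n).
  - intros n. transfer_neq_0 (Hd3 n).
  - intros n. transfer_neq_0 (Hd4 n).
  - rewrite Halpha0. reflexivity.
  - intros n Hn. rewrite (Hbeta n Hn). unfold Csum_0_n. autorewrite with toC.
    apply Csum_ext. intros j _. autorewrite with toC. rewrite (Cmult_comm (toC a)). reflexivity.
  - apply (Cabs_conv_toC T2); [transfer_term T2 | exact HT2].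
  - apply (Cabs_conv_toC F1); [transfer_term F1 | exact HF1].
  - apply (Cseries_sum_Cn_cv T1); [transfer_term T1 | exact H1].
  - apply (Cseries_sum_Cn_cv T2); [transfer_term T2 | exact H2].
  - apply (Cseries_sum_Cn_cv F1); [transfer_term F1 | exact H3].
  - apply (Cseries_sum_Cn_cv F2); [transfer_term F2 | exact H4].
  - apply (Cseries_sum_Cn_cv F3); [transfer_term F3 | exact H5].
  - apply (Cseries_sum_Cn_cv F4); [transfer_term F4 | exact H6].
  - split; [|split]; apply toC_inj; autorewrite with toC; assumption.
Qed.
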